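(* Let $\lambda,\mu\in\mathbb{C}$ and let $L=\widetilde{L_{\lambda,\mu}}^1$; for $j\in\mathbb{Z}$ let $\Delta_{j+\frac12}(L)$ be the space of $\frac12$-derivations of $L$ of degree $j+\frac12$. (1) If $\mu\in\frac12+\mathbb{Z}$ and $\lambda\notin\{-3,-1,1\}$, then $\Delta_{j+\frac12}(L)=0$ for all $j\in\mathbb{Z}$. (2) If $\mu\notin\frac12\mathbb{Z}$, or $\mu\in\mathbb{Z}$ and $\lambda\neq-1$, then $\Delta_{j+\frac12}(L)=0$ for $\lambda\neq1$, while for $\lambda=1$, $\Delta_{j+\frac12}(\widetilde{L_{1,\mu}}^1)$ consists exactly of the maps $\varphi$ for which there is $\alpha\in\mathbb{C}$ with $\varphi(L_n)=\alpha Y_{n+j+\frac12}$ and $\varphi(Y_{n+\frac12})=\alpha M_{n+j+1}$ for all $n\in\mathbb{Z}$, and $\varphi(M_n)=0$, $\varphi(C_L)=0$.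
   Context: For $\lambda,\mu\in\mathbb{C}$, $\widetilde{L_{\lambda,\mu}}^1$ is the complex Lie algebra with basis $\{L_n,M_n,Y_{n+\frac12},C_L\mid n\in\mathbb{Z}\}$, $C_L$ central, and nonzero brackets $[L_m,L_n]=(n-m)L_{m+n}+\frac{m^3-m}{12}\delta_{m+n,0}C_L$, $[L_m,M_n]=(n-\lambda m+2\mu)M_{m+n}$, $[L_m,Y_{n+\frac12}]=(n+\frac12-\frac{\lambda+1}{2}m+\mu)Y_{m+n+\frac12}$, $[Y_{m+\frac12},Y_{n+\frac12}]=(n-m)M_{m+n+1}$. It is $\frac12\mathbb{Z}$-graded by $W_0=\langle L_0,M_0,C_L\rangle$, $W_n=\langle L_n,M_n\rangle$ ($n\neq0$), $W_{n+\frac12}=\langle Y_{n+\frac12}\rangle$. A $\frac12$-derivation is a linear map $\varphi$ with $\varphi([x,y])=\frac12([\varphi(x),y]+[x,\varphi(y)])$; it has degree $g$ if $\varphi(W_h)\subseteq W_{g+h}$ for all $h\in\frac12\mathbb{Z}$. *)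

(* The Lie algebra \widetilde{L_{lambda,mu}}^1 over C is
   modelled as the free C-vector space {malg CC[B]} (finitely supported
   functions B -> CC, from multinomials' monalg) on the basis B, with the
   Lie bracket obtained by bilinear extension of the bracket on basis
   elements. *)
From HB Require Import structures.
From mathcomp Require Import all_boot all_order all_algebra.
From mathcomp Require Import Rstruct complex.
From mathcomp Require Import finmap.
From mathcomp.multinomials Require Import monalg.

Set Implicit Arguments.
Unset Strict Implicit.
Unset Printing Implicit Defensive.
Import GRing.Theory Num.Theory.
Local Open Scope ring_scope.

Definition CC : Type := (Rdefinitions.R)[i].

(* The basis: BL n = L_n, BM n = M_n, BY n = Y_{n+1/2}, BC = C_L. *)
Inductive B := BL of int | BM of int | BY of int | BC.

Definition B_enc (b : B) : (int + int) + (int + unit) :=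
  match b with
  | BL n => inl (inl n) | BM n => inl (inr n)
  | BY n => inr (inl n) | BC => inr (inr tt) end.
Definition B_dec (s : (int + int) + (int + unit)) : B :=
  match s with
  | inl (inl n) => BL n | inl (inr n) => BM n
  | inr (inl n) => BY n | inr (inr _) => BC end.
Lemma B_encK : cancel B_enc B_dec. Proof. by case. Qed.
HB.instance Definition _ := Countable.copy B (can_type B_encK).

Definition L : Type := {malg CC[B]}.

Definition bv (b : B) : L := << b >>.

Definition brB (lam mu : CC) (a b : B) : L :=
  match a, b with
  | BL m, BL n => ((n - m)%:~R : CC) *: bv (BL (m + n))
                  + (if m + n == 0 then ((m ^+ 3 - m)%:~R / 12%:R : CC) *: bv BC
                     else 0)
  | BL m, BM n => (n%:~R - lam * m%:~R + 2%:R * mu) *: bv (BM (m + n))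
  | BM n, BL m => - ((n%:~R - lam * m%:~R + 2%:R * mu) *: bv (BM (m + n)))
  | BL m, BY n => (n%:~R + 2%:R^-1 - (lam + 1) / 2%:R * m%:~R + mu)
                    *: bv (BY (m + n))
  | BY n, BL m => - ((n%:~R + 2%:R^-1 - (lam + 1) / 2%:R * m%:~R + mu)
                    *: bv (BY (m + n)))
  | BY m, BY n => ((n - m)%:~R : CC) *: bv (BM (m + n + 1))
  | _, _ => 0
  end.

Definition br (lam mu : CC) (x y : L) : L :=
  \sum_(a <- finmap.enum_fset (msupp x)) \sum_(b <- finmap.enum_fset (msupp y)) (x@_a * y@_b) *: brB lam mu a b.

(* twice the (1/2 Z)-degree of a basis vector *)
Definition deg2 (b : B) : int :=
  match b with
  | BL n => 2 * n | BM n => 2 * n | BY n => 2 * n + 1 | BC => 0 end.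

Definition inW (h2 : int) (x : L) : Prop :=
  forall b : B, b \in finmap.enum_fset (msupp x) -> deg2 b = h2.

Definition has_degree2 (g2 : int) (phi : L -> L) : Prop :=
  forall (h2 : int) (x : L), inW h2 x -> inW (h2 + g2) (phi x).

Definition half_derivation (lam mu : CC) (phi : {linear L -> L}) : Prop :=
  forall x y : L, phi (br lam mu x y)
                  = 2%:R^-1 *: (br lam mu (phi x) y + br lam mu x (phi y)).

Definition in_Z (z : CC) : Prop := exists k : int, z = k%:~R.
Definition in_halfZ (z : CC) : Prop := exists k : int, z = k%:~R / 2%:R.
Definition in_half_plus_Z (z : CC) : Prop :=
  exists k : int, z = k%:~R + 2%:R^-1.

(* A 1/2-derivation phi of odd degree 2j+1 sends every basis vector into a
   homogeneous component spanned by at most three basis vectors: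
   phi(L_n) = a_n Y_{n+j}, phi(M_n) = b_n Y_{n+j},
   phi(Y_n) = c_n L_{n+j+1} + d_n M_{n+j+1} + e_n C_L and phi(C_L) = f Y_j.
   Comparing coefficients in the 1/2-derivation identity on the pairs
   (L_m, Y_n), (M_m, Y_n), (C_L, Y_{j+1}) and (L_0, L_1) gives linear relations
   forcing b = c = e = f = 0, a_n = d_n = a_0 and (1 - lam) a_0 = 0.  Two of
   these steps need the structure constants of [L_m, Y_n] and [L_{m+1}, Y_{n-1}]
   not to vanish together; they differ by (lam + 3)/2, so this only fails when
   lam = -3 and mu is in 1/2 + Z.  Conversely, for lam = 1
   the maps phi_alpha satisfy the identity on all pairs of basis vectors, hence
   everywhere by bilinearity. *)

From HB Require Import structures.
From mathcomp Require Import all_boot all_order all_algebra.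
From mathcomp Require Import Rstruct complex.
From mathcomp Require Import finmap.
From mathcomp.multinomials Require Import monalg.
From mathcomp Require Import ring zify.
Import GRing.Theory Num.Theory.
Local Open Scope ring_scope.

(** * Bilinear reduction *)

Section HalfDefect.
Context {R : comNzRingType} {V : lmodType R}.
Variables (mul : V -> V -> V) (phi : {linear V -> V}) (h : R).
Hypothesis mul_linearl : forall c x1 x2 y, mul (c *: x1 + x2) y = c *: mul x1 y + mul x2 y.
Hypothesis mul_linearr : forall c x y1 y2, mul x (c *: y1 + y2) = c *: mul x y1 + mul x y2.

Definition half_defect (x y : V) : V :=
  phi (mul x y) - h *: (mul (phi x) y + mul x (phi y)).

Lemma half_defect_linearl c x1 x2 y :
  half_defect (c *: x1 + x2) y = c *: half_defect x1 y + half_defect x2 y.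
Proof.
rewrite /half_defect !linearP mul_linearl linearP !mul_linearl.
rewrite addrACA -scalerDr [h *: _]scalerDr scalerA mulrC -scalerA.
by rewrite opprD addrACA -scalerBr.
Qed.

Lemma half_defect_linearr c x y1 y2 :
  half_defect x (c *: y1 + y2) = c *: half_defect x y1 + half_defect x y2.
Proof.
rewrite /half_defect !linearP mul_linearr linearP !mul_linearr.
rewrite addrACA -scalerDr [h *: _]scalerDr scalerA mulrC -scalerA.
by rewrite opprD addrACA -scalerBr.
Qed.
End HalfDefect.

Lemma mcoeff_bv (a k : B) : (bv a)@_k = (a == k)%:R.
Proof. exact: mcoeffU. Qed.

Lemma msupp_bv (a : B) : msupp (bv a) = [fset a]%fset.
Proof. by rewrite msuppU oner_eq0. Qed.

Lemma malg_bv_expand (x : L) : x = \sum_(a <- msupp x) x@_a *: bv a.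
Proof.
rewrite {1}(monalgE x); apply: eq_bigr => a _.
by apply/malgP => k; rewrite mcoeffZ !mcoeffU mulr_natr.
Qed.

Lemma linear_bv_expand (phi : {linear L -> L}) (x : L) :
  phi x = \sum_(a <- msupp x) x@_a *: phi (bv a).
Proof.
by rewrite {1}(malg_bv_expand x) linear_sum; apply: eq_bigr => a _; rewrite linearZ.
Qed.

Lemma linear_eq0_basis (phi : {linear L -> L}) :
  (forall b, phi (bv b) = 0) -> forall x, phi x = 0.
Proof.
move=> phi0 x; rewrite linear_bv_expand big1_seq // => a _.
by rewrite phi0 scaler0.
Qed.

Lemma bilinear_eq0_basis (F : L -> L -> L) :
  (forall c x1 x2 y, F (c *: x1 + x2) y = c *: F x1 y + F x2 y) ->
  (forall c x y1 y2, F x (c *: y1 + y2) = c *: F x y1 + F x y2) ->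
  (forall a b, F (bv a) (bv b) = 0) -> forall x y, F x y = 0.
Proof.
move=> linl linr F0 x y.
have F0l z : F 0 z = 0.
  apply: (@addrI _ (F 0 z)); rewrite addr0 -[X in X + _](scale1r (F 0 z)) -linl.
  by rewrite scale1r addr0.
have F0r z : F z 0 = 0.
  apply: (@addrI _ (F z 0)); rewrite addr0 -[X in X + _](scale1r (F z 0)) -linr.
  by rewrite scale1r addr0.
rewrite (malg_bv_expand x) (malg_bv_expand y).
have Fbv a : F (bv a) (\sum_(b <- msupp y) y@_b *: bv b) = 0.
  elim: (msupp y : seq B) => [|b t IHt]; first by rewrite big_nil F0r.
  by rewrite big_cons linr IHt F0 scaler0 addr0.
elim: (msupp x : seq B) => [|a s IHs]; first by rewrite big_nil F0l.
by rewrite big_cons linl IHs Fbv scaler0 addr0.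
Qed.

Section Bracket.
Variables lam mu : CC.

Lemma br_expand {x y : L} {dx dy : {fset B}} :
  (msupp x `<=` dx)%fset -> (msupp y `<=` dy)%fset ->
  br lam mu x y = \sum_(a <- dx) \sum_(b <- dy) (x@_a * y@_b) *: brB lam mu a b.
Proof.
move=> sx sy; rewrite /br (big_fset_incl _ sx); last first.
  move=> a _ xa0; rewrite big1_seq // => b _.
  by rewrite (mcoeff_outdom xa0) mul0r scale0r.
apply: eq_bigr => a _; apply: big_fset_incl => // b _ yb0.
by rewrite (mcoeff_outdom yb0) mulr0 scale0r.
Qed.

Lemma brDl (x y z : L) : br lam mu (x + y) z = br lam mu x z + br lam mu y z.
Proof.
have sx := fsubsetUl (msupp x) (msupp y); have sy := fsubsetUr (msupp x) (msupp y).
rewrite (br_expand (msuppD_le x y) (fsubset_refl (msupp z))).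
rewrite (br_expand sx (fsubset_refl _)) (br_expand sy (fsubset_refl _)) -big_split /=.
apply: eq_bigr => a _; rewrite -big_split /=; apply: eq_bigr => b _.
by rewrite mcoeffD mulrDl scalerDl.
Qed.

Lemma brDr (x y z : L) : br lam mu z (x + y) = br lam mu z x + br lam mu z y.
Proof.
have sx := fsubsetUl (msupp x) (msupp y); have sy := fsubsetUr (msupp x) (msupp y).
rewrite (br_expand (fsubset_refl (msupp z)) (msuppD_le x y)).
rewrite (br_expand (fsubset_refl _) sx) (br_expand (fsubset_refl _) sy) -big_split /=.
apply: eq_bigr => a _; rewrite -big_split /=; apply: eq_bigr => b _.
by rewrite mcoeffD mulrDr scalerDl.
Qed.

Lemma brZl (c : CC) (x z : L) : br lam mu (c *: x) z = c *: br lam mu x z.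
Proof.
rewrite (br_expand (msuppZ_le c x) (fsubset_refl _)) /br scaler_sumr.
apply: eq_bigr => a _; rewrite scaler_sumr; apply: eq_bigr => b _.
by rewrite mcoeffZ scalerA mulrA.
Qed.

Lemma brZr (c : CC) (x z : L) : br lam mu z (c *: x) = c *: br lam mu z x.
Proof.
rewrite (br_expand (fsubset_refl _) (msuppZ_le c x)) /br scaler_sumr.
apply: eq_bigr => a _; rewrite scaler_sumr; apply: eq_bigr => b _.
by rewrite mcoeffZ scalerA mulrCA.
Qed.

Lemma br0l (z : L) : br lam mu 0 z = 0.
Proof. by have := brZl 0 0 z; rewrite !scale0r. Qed.

Lemma br0r (z : L) : br lam mu z 0 = 0.
Proof. by have := brZr 0 0 z; rewrite !scale0r. Qed.

Lemma br_linearl c (x1 x2 y : L) :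
  br lam mu (c *: x1 + x2) y = c *: br lam mu x1 y + br lam mu x2 y.
Proof. by rewrite brDl brZl. Qed.

Lemma br_linearr c (x y1 y2 : L) :
  br lam mu x (c *: y1 + y2) = c *: br lam mu x y1 + br lam mu x y2.
Proof. by rewrite brDr brZr. Qed.

Lemma br_bv (a b : B) : br lam mu (bv a) (bv b) = brB lam mu a b.
Proof. by rewrite /br !msupp_bv !big_seq_fset1 !mcoeff_bv !eqxx mulr1 scale1r. Qed.

Lemma half_derivation_basis (phi : {linear L -> L}) :
  (forall a b, half_defect (br lam mu) phi 2%:R^-1 (bv a) (bv b) = 0) ->
  half_derivation lam mu phi.
Proof.
move=> hbasis x y; apply/eqP; rewrite -subr_eq0; apply/eqP.
change (half_defect (br lam mu) phi 2%:R^-1 x y = 0); move: x y.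
apply: bilinear_eq0_basis hbasis => [c x1 x2 y | c x y1 y2].
  exact: (half_defect_linearl _ _ _ br_linearl).
exact: (half_defect_linearr _ _ _ br_linearr).
Qed.
End Bracket.

(** * Grading and formal linear combinations *)

Lemma inW_bv (b : B) : inW (deg2 b) (bv b).
Proof. by move=> k; rewrite msupp_bv => /fset1P ->. Qed.

Lemma inW0 (h : int) : inW h 0.
Proof. by move=> k; rewrite msupp0. Qed.

Lemma inWZ (h : int) (c : CC) (x : L) : inW h x -> inW h (c *: x).
Proof. by move=> hx k /(fsubsetP (msuppZ_le c x)); apply: hx. Qed.

Lemma inWD (h : int) (x y : L) : inW h x -> inW h y -> inW h (x + y).
Proof.
by move=> hx hy k /(fsubsetP (msuppD_le x y)) /fsetUP[/hx | /hy].
Qed.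

Lemma mcoeff_inW {h : int} {x : L} {k : B} : inW h x -> deg2 k != h -> x@_k = 0.
Proof.
by move=> hx /eqP hk; apply/eqP; rewrite mcoeff_eq0; apply/negP => /hx.
Qed.

Lemma has_degree2_basis (g : int) (phi : {linear L -> L}) :
  (forall b, inW (deg2 b + g) (phi (bv b))) -> has_degree2 g phi.
Proof.
move=> hb h x hx; rewrite linear_bv_expand big_seq.
apply: big_ind => [|u v|a xa]; [exact: inW0 | exact: inWD |].
by apply: inWZ; rewrite -(hx a xa).
Qed.

(* Unlike [==] on [B], which goes through the countable encoding, this
   reduces under [cbn]. *)
Definition B_eqb (a b : B) : bool :=
  match a, b with
  | BL m, BL n | BM m, BM n | BY m, BY n => m == n
  | BC, BC => true
  | _, _ => false
  end.

Lemma B_eqbE (a b : B) : B_eqb a b = (a == b).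
Proof.
by case: a => [m|m|m|]; case: b => [n|n|n|] //=; apply/eqP/eqP => [->|[]].
Qed.

(* A failing conversion between terms of [L] that may unfold [bv] descends
   into the equality test of [CC] and takes tens of seconds; formal linear
   combinations are therefore built on a locked copy of [bv], and their
   coefficients [lc_coef] compute by [cbn]. *)
Definition lbv : B -> L := locked bv.

Lemma lbvE (b : B) : lbv b = bv b.
Proof. by rewrite /lbv -lock. Qed.

Fixpoint lc_val (s : seq (CC * B)) : L :=
  if s is p :: s' then p.1 *: lbv p.2 + lc_val s' else 0.

Fixpoint lc_coef (s : seq (CC * B)) (k : B) : CC :=
  if s is p :: s' then (if B_eqb p.2 k then p.1 else 0) + lc_coef s' k else 0.

Definition lc_scale (c : CC) (s : seq (CC * B)) : seq (CC * B) :=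
  [seq (c * p.1, p.2) | p <- s].

Definition lc_map (P : B -> seq (CC * B)) (s : seq (CC * B)) : seq (CC * B) :=
  flatten [seq lc_scale p.1 (P p.2) | p <- s].

Lemma lc_coefE (s : seq (CC * B)) (k : B) : (lc_val s)@_k = lc_coef s k.
Proof.
elim: s => [|[c b] s IH] /=; first exact: mcoeff0.
by rewrite mcoeffD mcoeffZ lbvE mcoeff_bv IH -B_eqbE; case: B_eqb; rewrite ?mulr1 ?mulr0.
Qed.

Lemma lc_val_cat (s t : seq (CC * B)) : lc_val (s ++ t) = lc_val s + lc_val t.
Proof. by elim: s => [|p s IH] /=; rewrite ?add0r // IH addrA. Qed.

Lemma lc_val_scale (c : CC) (s : seq (CC * B)) : lc_val (lc_scale c s) = c *: lc_val s.
Proof.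
elim: s => [|p s IH] /=; first by rewrite scaler0.
by rewrite IH scalerDr scalerA.
Qed.

Lemma lc_val1 (p : CC * B) : lc_val [:: p] = p.1 *: lbv p.2.
Proof. exact: addr0. Qed.

Lemma lc_val2 (p q : CC * B) : lc_val [:: p; q] = p.1 *: lbv p.2 + q.1 *: lbv q.2.
Proof. by congr (_ + _); exact: addr0. Qed.

Lemma lc_val_bv (b : B) : lbv b = lc_val [:: (1, b)].
Proof. by rewrite lc_val1 scale1r. Qed.

Lemma linear_lc_val {phi : {linear L -> L}} {P : B -> seq (CC * B)} :
  (forall b, phi (lbv b) = lc_val (P b)) ->
  forall s, phi (lc_val s) = lc_val (lc_map P s).
Proof.
move=> hP; elim=> [|p s IH] /=; first exact: linear0.
by rewrite linearD linearZ /= IH hP lc_val_cat lc_val_scale.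
Qed.

Lemma inW_lc_val (h : int) (s : seq (CC * B)) :
  all (fun p => deg2 p.2 == h) s -> inW h (lc_val s).
Proof.
elim: s => [_|p s IH /= /andP[/eqP hp hs]]; first exact: inW0.
by apply: inWD (IH hs); apply: inWZ; rewrite -hp lbvE; exact: inW_bv.
Qed.

Lemma lc_coef_support (f : B -> CC) (s : seq B) (k : B) : uniq s ->
  lc_coef [seq (f b, b) | b <- s] k = if k \in s then f k else 0.
Proof.
elim: s => [|b s IH] //= /andP[bs us]; rewrite IH // in_cons B_eqbE.
by have [<-|] := eqVneq b k; rewrite ?(negbTE bs) ?addr0 ?add0r.
Qed.

Lemma inW_lc_support {h : int} {x : L} (s : seq B) :
  uniq s -> inW h x -> (forall k, deg2 k = h -> k \in s) ->
  x = lc_val [seq (x@_b, b) | b <- s].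
Proof.
move=> us hx hs; apply/malgP => k; rewrite lc_coefE lc_coef_support //.
case: ifP => // /negbT ks; rewrite (mcoeff_inW hx) //.
by apply/eqP => /hs; rewrite (negbTE ks).
Qed.

Section BracketLc.
Variables lam mu : CC.

(* [L_m, Y_{n+1/2}] = cLY m n Y_{m+n+1/2} and [L_m, M_n] = cLM m n M_{m+n}. *)
Definition cLY (m n : int) : CC := n%:~R + 2%:R^-1 - (lam + 1) / 2%:R * m%:~R + mu.
Definition cLM (m n : int) : CC := n%:~R - lam * m%:~R + 2%:R * mu.

Definition brB_lc (a b : B) : seq (CC * B) :=
  match a, b with
  | BL m, BL n => [:: (((n - m)%:~R : CC), BL (m + n));
                      ((if m + n == 0 then (m ^+ 3 - m)%:~R / 12%:R else 0), BC)]
  | BL m, BM n => [:: (cLM m n, BM (m + n))]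
  | BM n, BL m => [:: (- cLM m n, BM (m + n))]
  | BL m, BY n => [:: (cLY m n, BY (m + n))]
  | BY n, BL m => [:: (- cLY m n, BY (m + n))]
  | BY m, BY n => [:: (((n - m)%:~R : CC), BM (m + n + 1))]
  | _, _ => [::]
  end.

Lemma brB_lc_val (a b : B) : brB lam mu a b = lc_val (brB_lc a b).
Proof.
case: a => [m|m|m|]; case: b => [n|n|n|];
  rewrite /brB_lc ?lc_val1 ?lc_val2 /brB /cLY /cLM ?lbvE -?scaleNr //.
by congr (_ + _); case: (m + n == 0); rewrite ?scale0r.
Qed.

Definition lc_br (s t : seq (CC * B)) : seq (CC * B) :=
  flatten [seq flatten [seq lc_scale (p.1 * q.1) (brB_lc p.2 q.2) | q <- t] | p <- s].

Lemma br_lc_val (s t : seq (CC * B)) :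
  br lam mu (lc_val s) (lc_val t) = lc_val (lc_br s t).
Proof.
elim: s => [|p s IH] /=; first by rewrite br0l.
rewrite lc_val_cat brDl IH; congr (_ + _); clear IH.
elim: t => [|q t IH] /=; first by rewrite br0r.
rewrite lc_val_cat brDr IH; congr (_ + _).
by rewrite brZl brZr !lbvE br_bv brB_lc_val lc_val_scale scalerA mulrC.
Qed.

Lemma half_derivation_lcP {phi : {linear L -> L}} {P : B -> seq (CC * B)} :
  (forall b, phi (lbv b) = lc_val (P b)) ->
  half_derivation lam mu phi <->
  (forall a b k, lc_coef (lc_map P (brB_lc a b)) k
     = 2%:R^-1 * (lc_coef (lc_br (P a) [:: (1, b)]) k + lc_coef (lc_br [:: (1, a)] (P b)) k)).
Proof.
move=> hP.
have defect_lc a b : half_defect (br lam mu) phi 2%:R^-1 (bv a) (bv b)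
    = lc_val (lc_map P (brB_lc a b))
      - 2%:R^-1 *: (lc_val (lc_br (P a) [:: (1, b)]) + lc_val (lc_br [:: (1, a)] (P b))).
  rewrite /half_defect br_bv brB_lc_val (linear_lc_val hP) -!lbvE (hP a) (hP b).
  by rewrite (lc_val_bv a) (lc_val_bv b) !br_lc_val.
split=> [hder a b k | hcoef].
  have : half_defect (br lam mu) phi 2%:R^-1 (bv a) (bv b) = 0.
    by apply/eqP; rewrite /half_defect subr_eq0 hder.
  rewrite defect_lc => /eqP; rewrite subr_eq0 => /eqP /(congr1 (fun v : L => v@_k)).
  by rewrite mcoeffZ mcoeffD !lc_coefE.
apply: half_derivation_basis => a b; rewrite defect_lc; apply/eqP; rewrite subr_eq0.
by apply/eqP/malgP => k; rewrite mcoeffZ mcoeffD !lc_coefE.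
Qed.
End BracketLc.

(** * Half-derivations of odd degree *)

Lemma eq_of_scaled_subr {R : pzRingType} {x y x' y' : R} (c : R) :
  x = y -> x' - y' = c * (x - y) -> x' = y'.
Proof. by move=> -> e; apply/eqP; rewrite -subr_eq0 e subrr mulr0. Qed.

Ltac decide_int_eq := repeat match goal with
  | |- context [?x == ?y] => first
     [ rewrite (_ : (x == y) = true); last by apply/eqP; lia
     | rewrite (_ : (x == y) = false); last by apply/eqP; lia ]
  end.

Section OddHalfDerivation.
Variables (lam mu : CC) (j : int) (phi : {linear L -> L}).
Hypothesis phi_half : half_derivation lam mu phi.
Hypothesis phi_deg : has_degree2 (2 * j + 1) phi.
Local Notation cLY := (cLY lam mu).
Local Notation cLM := (cLM lam mu).

Definition coefL n := (phi (lbv (BL n)))@_(BY (n + j)).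
Definition coefM n := (phi (lbv (BM n)))@_(BY (n + j)).
Definition coefYL n := (phi (lbv (BY n)))@_(BL (n + j + 1)).
Definition coefYM n := (phi (lbv (BY n)))@_(BM (n + j + 1)).
Definition coefYC n := (phi (lbv (BY n)))@_BC.
Definition coefC := (phi (lbv BC))@_(BY j).

(* The [C_L] component of phi(Y_n) can only be nonzero when n + j + 1 = 0. *)
Definition phi_shape (b : B) : seq (CC * B) :=
  match b with
  | BL n => [:: (coefL n, BY (n + j))]
  | BM n => [:: (coefM n, BY (n + j))]
  | BY n => [:: (coefYL n, BL (n + j + 1)); (coefYM n, BM (n + j + 1)); (coefYC n, BC)]
  | BC => [:: (coefC, BY j)]
  end.

Lemma phi_shapeP (b : B) : phi (lbv b) = lc_val (phi_shape b).
Proof.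
have hb : inW (deg2 b + (2 * j + 1)) (phi (lbv b)) by rewrite lbvE; apply/phi_deg/inW_bv.
case: b hb => [n|n|n|] hb.
- apply: (inW_lc_support [:: BY (n + j)] _ hb) => // -[m|m|m|] /= hm; try (exfalso; lia).
  by rewrite (_ : m = n + j); [exact: mem_head | lia].
- apply: (inW_lc_support [:: BY (n + j)] _ hb) => // -[m|m|m|] /= hm; try (exfalso; lia).
  by rewrite (_ : m = n + j); [exact: mem_head | lia].
- apply: (inW_lc_support [:: BL (n + j + 1); BM (n + j + 1); BC] _ hb) => //.
  case=> [m|m|m|] /= hm; try (exfalso; lia); try by [].
  + by rewrite (_ : m = n + j + 1); [exact: mem_head | lia].
  + by rewrite (_ : m = n + j + 1); [rewrite !inE eqxx orbT | lia].
- apply: (inW_lc_support [:: BY j] _ hb) => // -[m|m|m|] /= hm; try (exfalso; lia).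
  by rewrite (_ : m = j); [exact: mem_head | lia].
Qed.

(* The coefficient at [k] of the 1/2-derivation identity on [a] and [b]; the
   stated equation, moved to one side, must be [c] times the computed one. *)
Ltac half_derivation_coef a b k c :=
  have := (half_derivation_lcP lam mu phi_shapeP).1 phi_half a b k;
  cbn [lc_coef lc_map lc_br brB_lc lc_scale phi_shape flatten foldr map cat B_eqb fst snd];
  decide_int_eq; cbn iota => /(eq_of_scaled_subr c); apply; rewrite /cLY /cLM; by field.

Lemma coefC_eq0 : coefC = 0.
Proof. half_derivation_coef BC (BY (j + 1)) (BM (j + (j + 1) + 1)) (-2 : CC). Qed.

Lemma coefL_eqn :
  2%:R * coefL 1 = coefL 1 * cLY 0 (j + 1) - coefL 0 * cLY 1 j.
Proof. half_derivation_coef (BL 0) (BL 1) (BY (1 + j)) (2 : CC). Qed.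

Lemma coefYL_eqn m n :
  2%:R * cLY m n * coefYL (m + n) = (n + j + 1 - m)%:~R * coefYL n.
Proof. half_derivation_coef (BL m) (BY n) (BL (m + n + j + 1)) (2 : CC). Qed.

Lemma coefYM_eqn m n : 2%:R * cLY m n * coefYM (m + n)
  = (n - m - j)%:~R * coefL m + cLM m (n + j + 1) * coefYM n.
Proof. half_derivation_coef (BL m) (BY n) (BM (m + n + j + 1)) (2 : CC). Qed.

Lemma coefYC_eqn m n : 2%:R * cLY m n * coefYC (m + n)
  = (if m + (n + j + 1) == 0 then (m ^+ 3 - m)%:~R / 12%:R else 0) * coefYL n.
Proof. half_derivation_coef (BL m) (BY n) BC (2 : CC). Qed.

Lemma coefM_eqn m n : (n - m - j)%:~R * coefM m = cLM (n + j + 1) m * coefYL n.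
Proof. half_derivation_coef (BM m) (BY n) (BM (m + j + n + 1)) (-2 : CC). Qed.

Lemma coefYL_eq0 n : coefYL n = 0.
Proof.
have coefYL_mul k : coefYL k * ((k - j)%:~R + 2%:R * mu) = 0.
  by apply: (eq_of_scaled_subr 1 (coefYL_eqn 0 k)); rewrite add0r /cLY; field.
have [t0|t0] := eqVneq ((n - j)%:~R + 2%:R * mu : CC) 0; last first.
  by move/eqP: (coefYL_mul n); rewrite mulf_eq0 (negbTE t0) orbF => /eqP.
(* (n - j) + 2 mu = 0, so the factor is nonzero at the shifted indices k + n. *)
have coefYL_shift k : k != 0 -> coefYL (k + n) = 0.
  move=> k0; move/eqP: (coefYL_mul (k + n)); rewrite mulf_eq0 => /orP[/eqP //|].
  have -> : ((k + n - j)%:~R + 2%:R * mu : CC) = k%:~R + ((n - j)%:~R + 2%:R * mu).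
    by rewrite !intrD !intrN; ring.
  by rewrite t0 addr0 intr_eq0 (negbTE k0).
have e1 : coefYL n * (n + j)%:~R = 0.
  by apply: (eq_of_scaled_subr (-1) (coefYL_eqn 1 n)); rewrite (coefYL_shift 1 isT); field.
have e2 : coefYL n * (n + j - 1)%:~R = 0.
  by apply: (eq_of_scaled_subr (-1) (coefYL_eqn 2 n)); rewrite (coefYL_shift 2 isT); field.
have [nj0|nj0] := eqVneq (n + j) 0.
  by move/eqP: e2; rewrite mulf_eq0 intr_eq0 => /orP[/eqP //|/eqP]; lia.
by move/eqP: e1; rewrite mulf_eq0 intr_eq0 (negbTE nj0) orbF => /eqP.
Qed.

Lemma coefM_eq0 m : coefM m = 0.
Proof.
by apply: (eq_of_scaled_subr 1 (coefM_eqn m (m + j + 1))); rewrite coefYL_eq0; field.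
Qed.

Lemma coefYM_eq_coefL0 n : n != j -> coefYM n = coefL 0.
Proof.
move=> nj; have e : (n - j)%:~R * (coefYM n - coefL 0) = 0.
  by apply: (eq_of_scaled_subr 1 (coefYM_eqn 0 n)); rewrite add0r /cLY /cLM; field.
by move/eqP: e; rewrite mulf_eq0 intr_eq0 !subr_eq0 => /orP[/eqP|/eqP //]; lia.
Qed.

Lemma coefL_const m : coefL m = coefL 0.
Proof.
have [d [d0 dm dNm]] : exists d : int, [/\ d != 0, d != m & d != - m].
  have [m1|m1] := boolP ((m == 1) || (m == -1)).
    by exists 2; split; apply/eqP; move: m1 => /orP[/eqP|/eqP] hm; lia.
  exists 1; split; apply/eqP; move: m1; rewrite negb_or => /andP[/eqP ? /eqP ?]; lia.
have h := coefYM_eqn m (j + d).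
rewrite !coefYM_eq_coefL0 in h; try by apply/eqP; lia.
have e : (d - m)%:~R * (coefL m - coefL 0) = 0.
  by apply: (eq_of_scaled_subr (-1) h); rewrite /cLY /cLM; field.
by move/eqP: e; rewrite mulf_eq0 intr_eq0 !subr_eq0 => /orP[/eqP|/eqP //]; lia.
Qed.

Lemma coefL0_lam1 : coefL 0 * (1 - lam) = 0.
Proof.
by apply: (eq_of_scaled_subr 2 coefL_eqn); rewrite coefL_const /cLY; field.
Qed.

Hypothesis nonexceptional : ~ (lam = - 3%:R /\ in_half_plus_Z mu).

(* cLY m n - cLY (m + 1) (n - 1) = (lam + 3) / 2. *)
Lemma cLY_consecutive m n : cLY m n = 0 -> cLY (m + 1) (n - 1) != 0.
Proof.
move=> c1; apply/eqP => c2; apply: nonexceptional.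
have lam3 : lam = - 3%:R.
  apply/eqP; rewrite -subr_eq0 opprK; apply/eqP.
  by apply: (eq_of_scaled_subr 2 (etrans c1 (esym c2))); rewrite /cLY; field.
split=> //; exists (- (n + m) - 1).
apply/eqP; rewrite -subr_eq0; apply/eqP.
by apply: (eq_of_scaled_subr 1 c1); rewrite /cLY lam3; field.
Qed.

Lemma coefYM_j : coefYM j = coefL 0.
Proof.
have key m : m != 0 -> cLY m (j - m) * (coefYM j - coefL 0) = 0.
  move=> m0; have h := coefYM_eqn m (j - m); have e : m + (j - m) = j by lia.
  rewrite e coefL_const (coefYM_eq_coefL0 (j - m)) in h; last by apply/eqP; lia.
  by apply: (eq_of_scaled_subr 2^-1 h); rewrite /cLY /cLM; field.
apply/eqP; rewrite -subr_eq0; apply/negPn/negP => ne.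
move/eqP: (key 1 isT); rewrite mulf_eq0 (negbTE ne) orbF => /eqP c1.
have e : j - 1 - 1 = j - 2 by lia.
have := cLY_consecutive _ _ c1; rewrite e => /negbTE c2.
by move/eqP: (key 2 isT); rewrite mulf_eq0 (negbTE ne) orbF c2.
Qed.

Lemma coefYC_eq0 n : coefYC n = 0.
Proof.
have c0 : cLY 0 n * coefYC n = 0.
  by apply: (eq_of_scaled_subr 2^-1 (coefYC_eqn 0 n)); rewrite add0r coefYL_eq0; field.
have c1 : cLY 1 (n - 1) * coefYC n = 0.
  have e : 1 + (n - 1) = n by lia.
  by apply: (eq_of_scaled_subr 2^-1 (coefYC_eqn 1 (n - 1))); rewrite e coefYL_eq0; field.
apply/eqP/negPn/negP => ne.
move/eqP: c0; rewrite mulf_eq0 (negbTE ne) orbF => /eqP /cLY_consecutive.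
by move/eqP: c1; rewrite mulf_eq0 (negbTE ne) orbF => ->.
Qed.

Lemma coefYM_const n : coefYM n = coefL 0.
Proof. by have [->|] := eqVneq n j; [exact: coefYM_j | exact: coefYM_eq_coefL0]. Qed.

Lemma odd_half_derivation_basis :
  [/\ forall n, phi (bv (BL n)) = coefL 0 *: bv (BY (n + j)),
      forall n, phi (bv (BY n)) = coefL 0 *: bv (BM (n + j + 1)),
      forall n, phi (bv (BM n)) = 0,
      phi (bv BC) = 0 &
      coefL 0 * (1 - lam) = 0].
Proof.
split=> [n|n|n||]; rewrite -?lbvE ?phi_shapeP /=; last exact: coefL0_lam1.
- by rewrite coefL_const addr0 lbvE.
- by rewrite coefYL_eq0 coefYC_eq0 coefYM_const !scale0r add0r !addr0 lbvE.
- by rewrite coefM_eq0 scale0r addr0.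
- by rewrite coefC_eq0 scale0r addr0.
Qed.

End OddHalfDerivation.

Lemma odd_half_derivation_eq0 (lam mu : CC) (j : int) (phi : {linear L -> L}) :
  lam != 1 -> ~ (lam = - 3%:R /\ in_half_plus_Z mu) ->
  half_derivation lam mu phi -> has_degree2 (2 * j + 1) phi -> forall x, phi x = 0.
Proof.
move=> lam1 nonexceptional hder hdeg.
have [phiL phiY phiM phiC] := odd_half_derivation_basis _ _ _ _ hder hdeg nonexceptional.
move/eqP; rewrite mulf_eq0 subr_eq0 [1 == _]eq_sym (negbTE lam1) orbF => /eqP a0.
by apply: linear_eq0_basis => -[n|n|n|]; rewrite ?phiL ?phiY ?a0 ?scale0r.
Qed.

(** * The case lam = 1 *)

Ltac split_int_eq := repeat match goal with
  | |- context [?x == ?k] => is_var k;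
      let e := fresh "e" in have [e|e] := eqVneq x k; first subst k
  end.

Section LambdaOne.
Variables (mu alpha : CC) (j : int).

Definition alpha_shape (b : B) : seq (CC * B) :=
  match b with
  | BL n => [:: (alpha, BY (n + j))]
  | BY n => [:: (alpha, BM (n + j + 1))]
  | _ => [::]
  end.

Lemma alpha_shape_coef a b k :
  lc_coef (lc_map alpha_shape (brB_lc 1 mu a b)) k
  = 2%:R^-1 * (lc_coef (lc_br 1 mu (alpha_shape a) [:: (1, b)]) k
               + lc_coef (lc_br 1 mu [:: (1, a)] (alpha_shape b)) k).
Proof.
case: a => [m|m|m|]; case: b => [n|n|n|]; case: k => [k|k|k|];
  cbn [lc_coef lc_map lc_br brB_lc lc_scale alpha_shape flatten foldr map cat B_eqb fst snd];
  split_int_eq; first [by exfalso; lia | decide_int_eq; cbn iota; rewrite /cLY /cLM; by field].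
Qed.

Lemma alpha_shape_half_derivation (phi : {linear L -> L}) :
  (forall b, phi (lbv b) = lc_val (alpha_shape b)) ->
  half_derivation 1 mu phi /\ has_degree2 (2 * j + 1) phi.
Proof.
move=> hP; split; first exact/(half_derivation_lcP 1 mu hP)/alpha_shape_coef.
apply: has_degree2_basis => b; rewrite -lbvE hP; apply: inW_lc_val.
by case: b => [n|n|n|] //=; rewrite andbT; apply/eqP; lia.
Qed.
End LambdaOne.

Lemma in_half_plus_Z_halfZ (z : CC) : in_half_plus_Z z -> in_halfZ z.
Proof. by case=> k ->; exists (2 * k + 1); rewrite intrD intrM; field. Qed.

Lemma in_half_plus_Z_notZ (z : CC) : in_half_plus_Z z -> ~ in_Z z.
Proof.
case=> k -> [m e].
have : ((2 * (m - k) - 1)%:~R : CC) = 0 by rewrite intrB intrM intrB -e; field.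
by move/eqP; rewrite intr_eq0 => /eqP; lia.
Qed.

Theorem mainTheorem6 (lam mu : CC) (j : int) :
  (* (1) *)
  (in_half_plus_Z mu -> lam != - 3%:R -> lam != - 1 -> lam != 1 ->
     forall phi : {linear L -> L},
       half_derivation lam mu phi -> has_degree2 (2 * j + 1) phi ->
       forall x : L, phi x = 0)
  /\
  (* (2) *)
  ((~ in_halfZ mu \/ (in_Z mu /\ lam != - 1)) ->
     (lam != 1 ->
        forall phi : {linear L -> L},
          half_derivation lam mu phi -> has_degree2 (2 * j + 1) phi ->
          forall x : L, phi x = 0)
     /\
     (lam = 1 ->
        forall phi : {linear L -> L},
          (half_derivation lam mu phi /\ has_degree2 (2 * j + 1) phi) <->
          (exists alpha : CC,
              (forall n : int, phi (bv (BL n)) = alpha *: bv (BY (n + j)))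
           /\ (forall n : int, phi (bv (BY n)) = alpha *: bv (BM (n + j + 1)))
           /\ (forall n : int, phi (bv (BM n)) = 0)
           /\ phi (bv BC) = 0))).
Proof.
split=> [_ lam3 _ lam1 phi | hmu].
  by apply: odd_half_derivation_eq0 lam1 _ => -[e _]; rewrite e eqxx in lam3.
have nonexceptional : ~ (lam = - 3%:R /\ in_half_plus_Z mu).
  case=> _ /[dup] /in_half_plus_Z_notZ notZ /in_half_plus_Z_halfZ halfZ.
  by case: hmu => [|[]].
split=> [lam1 phi | lam1 phi]; first exact: odd_half_derivation_eq0 lam1 nonexceptional.
subst lam.
split=> [[hder hdeg] | [alpha [phiL [phiY [phiM phiC]]]]].
  have [phiL phiY phiM phiC _] := odd_half_derivation_basis _ _ _ _ hder hdeg nonexceptional.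
  by exists (coefL j phi 0); split; [exact: phiL | split; [exact: phiY | split]].
apply: (alpha_shape_half_derivation _ alpha) => -[n|n|n|];
  by rewrite lbvE /= ?phiL ?phiY ?phiM ?phiC ?addr0 ?lbvE.
Qed.
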